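(* Let $\Bbbk$ be an algebraically closed field of characteristic $2$ and let $\mathfrak{u}(\mathfrak{m})$ be the Hopf algebra generated by $a,b,c$ with relations $ab+ba=c$, $ac+ca=a$, $bc+cb=b$, $a^4=b^4=0$, $c^2+c=0$ and $a,b,c$ primitive. If $0\to V_0\to U\to V_1\to 0$ is an exact sequence of $\mathfrak{u}(\mathfrak{m})$-modules, then $U\simeq V_{\vartheta,\lambda,\mu}^*$ for some $\vartheta,\lambda,\mu\in\Bbbk$. Moreover $\dim\operatorname{Ext}^1_{\mathfrak{u}(\mathfrak{m})}(V_1,V_0)=2$.
   Context: $V_0$ is the one-dimensional module on which $a,b,c$ act by $0$. $V_1$ is the three-dimensional module with basis $v_1,v_2,v_3$ and action $av_1=v_2$, $av_2=v_3$, $av_3=0$; $bv_1=0$, $bv_2=v_1$, $bv_3=v_2$; $cv_1=v_1$, $cv_2=0$, $cv_3=v_3$. For $\vartheta,\lambda,\mu\in\Bbbk$, $V_{\vartheta,\lambda,\mu}$ is $\Bbbk^4$ with standard basis $e_1,\dots,e_4$ and action $ae_1=\vartheta e_2$, $ae_2=e_3$, $ae_3=e_4$, $ae_4=0$; $be_1=\lambda e_3+\mu e_4$, $be_2=0$, $be_3=e_2$, $be_4=e_3$; $ce_1=\lambda e_4$, $ce_2=e_2$, $ce_3=0$, $ce_4=e_4$. For a module $M$, $M^*$ is the linear dual with action $(x\cdot\alpha)(m)=\alpha(S(x)m)$, $S$ the antipode. *)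

From HB Require Import structures.
From mathcomp Require Import all_boot all_order all_algebra.
Set Implicit Arguments. Unset Strict Implicit. Unset Printing Implicit Defensive.
Import GRing.Theory.
Local Open Scope ring_scope.

(* A finite-dimensional (left) module over u(m) of dimension n: the matrices
   (acting on column vectors) of the three generators a, b, c. *)
Record umod (F : fieldType) (n : nat) := UMod {
  ma : 'M[F]_n; mb : 'M[F]_n; mc : 'M[F]_n }.

Definition is_umod (F : fieldType) n (M : umod F n) : Prop :=
  [/\ ma M *m mb M + mb M *m ma M = mc M,
      ma M *m mc M + mc M *m ma M = ma M,
      mb M *m mc M + mc M *m mb M = mb M,
      ma M *m ma M *m ma M *m ma M = 0 &
      mb M *m mb M *m mb M *m mb M = 0 /\
      mc M *m mc M + mc M = 0].

Definition is_umod_hom (F : fieldType) m n (M : umod F m) (N : umod F n)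
  (f : 'M[F]_(n, m)) : Prop :=
  [/\ f *m ma M = ma N *m f, f *m mb M = mb N *m f & f *m mc M = mc N *m f].

Definition umod_iso (F : fieldType) m n (M : umod F m) (N : umod F n) : Prop :=
  exists (f : 'M[F]_(n, m)) (g : 'M[F]_(m, n)),
    [/\ is_umod_hom M N f, f *m g = 1%:M & g *m f = 1%:M].

(* Dual module: (x.alpha)(v) = alpha(S(x) v) with S(x) = -x for the primitive
   generators; in the dual basis the matrix of x is -(X^T). *)
Definition udual (F : fieldType) n (M : umod F n) : umod F n :=
  UMod (- (ma M)^T) (- (mb M)^T) (- (mc M)^T).

(* Elementary matrix units, 1-indexed as in the paper: E i j has a 1 in row i,
   column j, so that E i j sends basis vector j to basis vector i. *)
Definition E (F : fieldType) n (i j : nat) : 'M[F]_n.+1 :=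
  delta_mx (inord i.-1) (inord j.-1).

Definition V0 (F : fieldType) : umod F 1 := UMod 0 0 0.

(* V_1: a v1 = v2, a v2 = v3, a v3 = 0; b v1 = 0, b v2 = v1, b v3 = v2;
   c v1 = v1, c v2 = 0, c v3 = v3. *)
Definition V1 (F : fieldType) : umod F 3 :=
  UMod (E F 2 2 1 + E F 2 3 2)
       (E F 2 1 2 + E F 2 2 3)
       (E F 2 1 1 + E F 2 3 3).

(* V_{theta,lambda,mu}:
   a e1 = th e2, a e2 = e3, a e3 = e4, a e4 = 0;
   b e1 = la e3 + mu e4, b e2 = 0, b e3 = e2, b e4 = e3;
   c e1 = la e4, c e2 = e2, c e3 = 0, c e4 = e4. *)
Definition Vtlm (F : fieldType) (th la mu : F) : umod F 4 :=
  UMod (th *: E F 3 2 1 + E F 3 3 2 + E F 3 4 3)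
       (la *: E F 3 3 1 + mu *: E F 3 4 1 + E F 3 2 3 + E F 3 3 4)
       (la *: E F 3 4 1 + E F 3 2 2 + E F 3 4 4).

(* Ext^1(M, N) via cocycles: an extension 0 -> N -> X -> M -> 0 can be taken on
   the vector space N (+) M with block upper triangular action; the
   off-diagonal blocks (fa, fb, fc) are the 1-cocycles, and cocycles coming
   from a change of splitting g : M -> N are the coboundaries. *)
Definition ext_mod (F : fieldType) n m (N : umod F n) (M : umod F m)
  (fa fb fc : 'M[F]_(n, m)) : umod F (n + m) :=
  UMod (block_mx (ma N) fa 0 (ma M))
       (block_mx (mb N) fb 0 (mb M))
       (block_mx (mc N) fc 0 (mc M)).

Definition is_cocycle (F : fieldType) n m (N : umod F n) (M : umod F m)
  (fa fb fc : 'M[F]_(n, m)) : Prop := is_umod (ext_mod N M fa fb fc).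

Definition is_coboundary (F : fieldType) n m (N : umod F n) (M : umod F m)
  (fa fb fc : 'M[F]_(n, m)) : Prop :=
  exists g : 'M[F]_(n, m),
    [/\ fa = ma N *m g - g *m ma M, fb = mb N *m g - g *m mb M &
        fc = mc N *m g - g *m mc M].

(* dim Ext^1(M, N) = d : there are d cocycles whose classes form a basis of
   the quotient space (cocycles)/(coboundaries). *)
Definition dim_Ext1_eq (F : fieldType) n m (M : umod F m) (N : umod F n)
  (d : nat) : Prop :=
  exists za zb zc : 'I_d -> 'M[F]_(n, m),
    [/\ forall i, is_cocycle N M (za i) (zb i) (zc i),
        forall fa fb fc, is_cocycle N M fa fb fc ->
          exists s : 'I_d -> F,
            is_coboundary N M (fa - \sum_i s i *: za i)
                              (fb - \sum_i s i *: zb i)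
                              (fc - \sum_i s i *: zc i) &
        forall s : 'I_d -> F,
          is_coboundary N M (\sum_i s i *: za i) (\sum_i s i *: zb i)
                            (\sum_i s i *: zc i) ->
          forall i, s i = 0].

(* Lift v_1 to u_1 in the extension U and put v_2 = a u_1, v_3 = a v_2.  As p
   is a module map, a v_3, b u_1 and b v_2 - u_1 lie in ker p = k i, which
   produces the parameters theta, mu and lambda; in characteristic 2 the
   relations c = ab + ba and a = ac + ca then force c u_1 = b v_2, c v_2 = 0,
   b v_3 = v_2 and c v_3 = v_3.  These are the matrices of V_{theta,lambda,mu}^*
   in the basis (i, v_3, v_2, u_1), dual to (e_1, e_2, e_3, e_4).
   For Ext^1(V_1, V_0) a cocycle is a triple (f_a, f_b, f_c) of functionals on
   V_1: the cocycle identities leave five free coordinates, the coboundaries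
   (g a, g b, g c) account for three of them, and the classes are detected by
   f_a(v_3) and f_b(v_1). *)

From HB Require Import structures.
From mathcomp Require Import all_boot all_order all_algebra.
From mathcomp Require Import ring.
Set Implicit Arguments. Unset Strict Implicit. Unset Printing Implicit Defensive.
Import GRing.Theory.
Local Open Scope ring_scope.

Lemma inord_eqE n a b : (a <= n)%N -> (b <= n)%N ->
  (inord a == inord b :> 'I_n.+1) = (a == b).
Proof. by move=> ha hb; rewrite -val_eqE /= !inordK. Qed.

Lemma ord2P (P : 'I_2 -> Prop) : P (inord 0) -> P (inord 1) -> forall j, P j.
Proof. by move=> P0 P1 j; rewrite -[j]inord_val; case: j => [[|[|]]]. Qed.

Lemma ord3P (P : 'I_3 -> Prop) :
  P (inord 0) -> P (inord 1) -> P (inord 2) -> forall j, P j.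
Proof. by move=> P0 P1 P2 j; rewrite -[j]inord_val; case: j => [[|[|[|]]]]. Qed.

Lemma ord4P (P : 'I_4 -> Prop) :
  P (inord 0) -> P (inord 1) -> P (inord 2) -> P (inord 3) -> forall j, P j.
Proof.
by move=> P0 P1 P2 P3 j; rewrite -[j]inord_val; case: j => [[|[|[|[|]]]]].
Qed.

Lemma big_ord2_inord (V : nmodType) (G : 'I_2 -> V) :
  \sum_(k < 2) G k = G (inord 0) + G (inord 1).
Proof.
rewrite !big_ord_recl big_ord0 addr0.
by congr (G _ + G _); apply/val_inj; rewrite /= inordK.
Qed.

Lemma big_ord3_inord (V : nmodType) (G : 'I_3 -> V) :
  \sum_(k < 3) G k = G (inord 0) + G (inord 1) + G (inord 2).
Proof.
rewrite !big_ord_recl big_ord0 addr0 !addrA.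
by congr (G _ + G _ + G _); apply/val_inj; rewrite /= inordK.
Qed.

Lemma big_ord4_inord (V : nmodType) (G : 'I_4 -> V) :
  \sum_(k < 4) G k = G (inord 0) + G (inord 1) + G (inord 2) + G (inord 3).
Proof.
rewrite !big_ord_recl big_ord0 addr0 !addrA.
by congr (G _ + G _ + G _ + G _); apply/val_inj; rewrite /= inordK.
Qed.

Ltac mx_compute :=
  rewrite ?(mxE, big_ord3_inord, big_ord4_inord) /= /E ?mxE ?inordK //
    ?inord_eqE //= ?mxE;
  rewrite ?(addr0, add0r, mulr0, mul0r, mulr1, mul1r, subr0, sub0r, oppr0).

Lemma oppmx_pchar2 (R : nzRingType) (pchar2 : 2 \in [pchar R]) m n
  (M : 'M[R]_(m, n)) : - M = M.
Proof. by apply/matrixP => r c; rewrite mxE oppr_pchar2. Qed.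

Lemma mulmx_bij_inv (R : nzRingType) m n (g : 'M[R]_(m, n)) :
    (forall c : 'cV_n, g *m c = 0 -> c = 0) ->
    (forall v : 'cV_m, exists c, g *m c = v) ->
  exists h, g *m h = 1%:M /\ h *m g = 1%:M.
Proof.
move=> g_inj g_surj.
have [c gc] := fin_all_exists (fun j : 'I_m => g_surj (delta_mx j 0)).
pose h := \matrix_(k, j) c j k 0.
have gh : g *m h = 1%:M.
  apply/matrixP => r j; have := congr1 (fun v : 'cV_m => v r 0) (gc j).
  rewrite !mxE eqxx andbT eq_sym => <-.
  by apply: eq_bigr => k _; rewrite mxE.
exists h; split=> //; apply/matrixP => r j.
have /colP/(_ r) : col j (h *m g - 1%:M) = 0.
  by apply: g_inj; rewrite colE mulmxA mulmxBr mulmxA gh mul1mx mulmx1 subrr mul0mx.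
by rewrite !mxE => /eqP; rewrite subr_eq0 => /eqP.
Qed.

Lemma umod_iso_inv (F : fieldType) m n (M : umod F m) (N : umod F n)
    (g : 'M[F]_(m, n)) (h : 'M[F]_(n, m)) :
  is_umod_hom N M g -> g *m h = 1%:M -> h *m g = 1%:M -> umod_iso M N.
Proof.
move=> [ga gb gc] gh hg; exists h, g; split=> //.
have intertwine X Y : X *m g = g *m Y -> h *m X = Y *m h.
  by move=> XY; rewrite -[LHS]mulmx1 -gh mulmxA -(mulmxA h) XY mulmxA hg mul1mx.
by split; apply: intertwine.
Qed.

Section TrivialSubmodule.
Variables (F : fieldType) (m : nat) (M : umod F m).

Lemma cocycle_V0P (M_umod : is_umod M) fa fb fc :
  is_cocycle (V0 F) M fa fb fc <->
  [/\ fa *m mb M + fb *m ma M = fc, fa *m mc M + fc *m ma M = fa,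
      fb *m mc M + fc *m mb M = fb, fa *m ma M *m ma M *m ma M = 0 &
      fb *m mb M *m mb M *m mb M = 0 /\ fc *m mc M + fc = 0].
Proof.
case: M_umod => MAB MAC MBC MA4 [MB4 MC2].
rewrite /is_cocycle /is_umod /ext_mod /=.
rewrite !mulmx_block !add_block_mx !(mul0mx, mulmx0, addr0, add0r).
rewrite MAB MAC MBC MA4 MB4 MC2 -block_mx0.
split=> [[] | [-> -> -> -> [-> ->]]] //.
by move=> /eq_block_mx[_ -> _ _] /eq_block_mx[_ -> _ _] /eq_block_mx[_ -> _ _]
  /eq_block_mx[_ -> _ _] [/eq_block_mx[_ -> _ _] /eq_block_mx[_ -> _ _]].
Qed.

Lemma coboundary_V0P (pchar2 : 2 \in [pchar F]) fa fb fc :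
  is_coboundary (V0 F) M fa fb fc <->
  exists g, [/\ fa = g *m ma M, fb = g *m mb M & fc = g *m mc M].
Proof.
rewrite /is_coboundary /=.
by split=> -[g gM]; exists g; move: gM; rewrite !mul0mx !sub0r !(oppmx_pchar2 pchar2).
Qed.

End TrivialSubmodule.

Section Coordinates.
Variable F : fieldType.

Definition row3 (x y z : F) : 'rV[F]_3 := \row_j [:: x; y; z]`_j.
Definition col3 (x y z : F) : 'cV[F]_3 := \col_j [:: x; y; z]`_j.

Lemma row3E (f : 'rV[F]_3) : f = row3 (f 0 (inord 0)) (f 0 (inord 1)) (f 0 (inord 2)).
Proof. by apply/rowP; apply: ord3P; rewrite mxE inordK. Qed.

Lemma col3E (v : 'cV[F]_3) : v = col3 (v (inord 0) 0) (v (inord 1) 0) (v (inord 2) 0).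
Proof. by apply/colP; apply: ord3P; rewrite mxE inordK. Qed.

Lemma row30 : row3 0 0 0 = 0.
Proof. by apply/rowP; apply: ord3P; mx_compute. Qed.

Lemma col30 : col3 0 0 0 = 0.
Proof. by apply/colP; apply: ord3P; mx_compute. Qed.

Lemma row3D x y z x' y' z' :
  row3 x y z + row3 x' y' z' = row3 (x + x') (y + y') (z + z').
Proof. by apply/rowP; apply: ord3P; mx_compute. Qed.

Lemma col3D x y z x' y' z' :
  col3 x y z + col3 x' y' z' = col3 (x + x') (y + y') (z + z').
Proof. by apply/colP; apply: ord3P; mx_compute. Qed.

Lemma row3Z k x y z : k *: row3 x y z = row3 (k * x) (k * y) (k * z).
Proof. by apply/rowP; apply: ord3P; mx_compute. Qed.

Lemma col3Z k x y z : k *: col3 x y z = col3 (k * x) (k * y) (k * z).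
Proof. by apply/colP; apply: ord3P; mx_compute. Qed.

Lemma row3_inj x y z x' y' z' :
  row3 x y z = row3 x' y' z' -> [/\ x = x', y = y' & z = z'].
Proof.
move=> /rowP e; have := e (inord 0); have := e (inord 1); have := e (inord 2).
by mx_compute.
Qed.

Lemma col3_inj x y z x' y' z' :
  col3 x y z = col3 x' y' z' -> [/\ x = x', y = y' & z = z'].
Proof.
move=> /colP e; have := e (inord 0); have := e (inord 1); have := e (inord 2).
by mx_compute.
Qed.

Lemma mx_col3P k (A B : 'M[F]_(k, 3)) :
  (forall x y z, A *m col3 x y z = B *m col3 x y z) -> A = B.
Proof.
move=> AB; apply/matrixP => r j.
pose e : 'cV[F]_3 := delta_mx j 0.
have /colP/(_ r) : A *m e = B *m e by rewrite [e]col3E AB.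
by rewrite -!colE !mxE.
Qed.

Lemma row3_V1a x y z : row3 x y z *m ma (V1 F) = row3 y z 0.
Proof. by apply/rowP; apply: ord3P; mx_compute. Qed.

Lemma row3_V1b x y z : row3 x y z *m mb (V1 F) = row3 0 x y.
Proof. by apply/rowP; apply: ord3P; mx_compute. Qed.

Lemma row3_V1c x y z : row3 x y z *m mc (V1 F) = row3 x 0 z.
Proof. by apply/rowP; apply: ord3P; mx_compute. Qed.

Lemma col3_V1a x y z : ma (V1 F) *m col3 x y z = col3 0 x y.
Proof. by apply/colP; apply: ord3P; mx_compute. Qed.

Lemma col3_V1b x y z : mb (V1 F) *m col3 x y z = col3 y z 0.
Proof. by apply/colP; apply: ord3P; mx_compute. Qed.

Lemma col3_V1c x y z : mc (V1 F) *m col3 x y z = col3 x 0 z.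
Proof. by apply/colP; apply: ord3P; mx_compute. Qed.

Lemma V1_umod : 2 \in [pchar F] -> is_umod (V1 F).
Proof.
move=> pchar2; move: col3_V1a col3_V1b col3_V1c.
case: (V1 F) => A B C /= Acol Bcol Ccol.
split; try split; apply: mx_col3P => x y z;
  rewrite ?mulmxDl -!mulmxA ?mul0mx !(Acol, Bcol, Ccol) ?col3D;
  by rewrite ?(addr0, add0r, addrr_pchar2 pchar2) ?col30.
Qed.

Definition cols4 m (w x y z : 'cV[F]_m) : 'M[F]_(m, 4) :=
  \matrix_(r, j) [:: w; x; y; z]`_j r 0.

Lemma mulmx_cols4 k m (A : 'M[F]_(k, m)) w x y z :
  A *m cols4 w x y z = cols4 (A *m w) (A *m x) (A *m y) (A *m z).
Proof.
apply/matrixP => r; apply: ord4P; rewrite !mxE inordK //= [RHS]mxE;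
  by apply: eq_bigr => l _; rewrite mxE inordK.
Qed.

Lemma cols4_mulmx m (w x y z : 'cV[F]_m) (c : 'cV[F]_4) :
  cols4 w x y z *m c =
  c (inord 0) 0 *: w + c (inord 1) 0 *: x + c (inord 2) 0 *: y + c (inord 3) 0 *: z.
Proof. by apply/matrixP => r l; rewrite ord1; mx_compute; ring. Qed.

Lemma cols4_dualVa th la mu m (w x y z : 'cV[F]_m) :
  cols4 w x y z *m ma (udual (Vtlm th la mu)) = cols4 0 (- (th *: w)) (- x) (- y).
Proof. by apply/matrixP => r; apply: ord4P; mx_compute; ring. Qed.

Lemma cols4_dualVb th la mu m (w x y z : 'cV[F]_m) :
  cols4 w x y z *m mb (udual (Vtlm th la mu)) =
  cols4 0 (- y) (- (la *: w) - z) (- (mu *: w)).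
Proof. by apply/matrixP => r; apply: ord4P; mx_compute; ring. Qed.

Lemma cols4_dualVc th la mu m (w x y z : 'cV[F]_m) :
  cols4 w x y z *m mc (udual (Vtlm th la mu)) = cols4 0 (- x) 0 (- (la *: w) - z).
Proof. by apply/matrixP => r; apply: ord4P; mx_compute; ring. Qed.

End Coordinates.

Section Extension.
Variables (F : fieldType) (n : nat) (U : umod F n).
Variables (i : 'M[F]_(n, 1)) (p : 'M[F]_(3, n)) (u1 : 'cV[F]_n).
Hypotheses (pchar2 : 2 \in [pchar F]) (U_umod : is_umod U).
Hypotheses (i_hom : is_umod_hom (V0 F) U i) (p_hom : is_umod_hom U (V1 F) p).
Hypothesis i_inj : forall w : 'cV[F]_1, i *m w = 0 -> w = 0.
Hypothesis ker_p : forall v : 'cV[F]_n, p *m v = 0 <-> exists w : 'cV[F]_1, v = i *m w.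
Hypothesis p_u1 : p *m u1 = col3 1 0 0.

Local Notation A := (ma U).
Local Notation B := (mb U).
Local Notation C := (mc U).
Local Notation v2 := (A *m u1).
Local Notation v3 := (A *m v2).

Lemma U_i : [/\ A *m i = 0, B *m i = 0 & C *m i = 0].
Proof. by case: i_hom => <- <- <-; rewrite !mulmx0. Qed.

Lemma p_i : p *m i = 0.
Proof. by apply/ker_p; exists 1%:M; rewrite mulmx1. Qed.

Lemma ker_pP v : p *m v = 0 -> exists k, v = k *: i.
Proof.
by move/ker_p => [w ->]; exists (w 0 0); rewrite {1}[w]mx11_scalar mul_mx_scalar.
Qed.

Lemma scalei_eq0 k : k *: i = 0 -> k = 0.
Proof.
move=> ki0; have /matrixP/(_ 0 0) : k%:M = 0 :> 'cV_1.
  by apply: i_inj; rewrite mul_mx_scalar.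
by rewrite !mxE.
Qed.

Lemma p_v2 : p *m v2 = col3 0 1 0.
Proof. by case: p_hom => pA _ _; rewrite mulmxA pA -mulmxA p_u1 col3_V1a. Qed.

Lemma p_v3 : p *m v3 = col3 0 0 1.
Proof. by case: p_hom => pA _ _; rewrite mulmxA pA -mulmxA p_v2 col3_V1a. Qed.

Lemma A_v3 : exists th, A *m v3 = th *: i.
Proof.
by case: p_hom => pA _ _; apply: ker_pP; rewrite mulmxA pA -mulmxA p_v3 col3_V1a col30.
Qed.

Lemma B_u1 : exists mu, B *m u1 = mu *: i.
Proof.
by case: p_hom => _ pB _; apply: ker_pP; rewrite mulmxA pB -mulmxA p_u1 col3_V1b col30.
Qed.

Lemma B_v2 : exists la, B *m v2 = la *: i + u1.
Proof.
case: p_hom => _ pB _; have [la Bv2] : exists la, B *m v2 - u1 = la *: i.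
  by apply: ker_pP; rewrite mulmxBr (mulmxA p) pB -mulmxA p_v2 p_u1 col3_V1b subrr.
by exists la; rewrite -Bv2 subrK.
Qed.

Lemma C_u1 : C *m u1 = B *m v2.
Proof.
case: U_umod => AB _ _ _ _; have [mu Bu1] := B_u1; have [Ai _ _] := U_i.
by rewrite -AB mulmxDl -!mulmxA Bu1 -scalemxAr Ai scaler0 add0r.
Qed.

Lemma A_B_v2 : A *m (B *m v2) = v2.
Proof.
have [la ->] := B_v2; have [Ai _ _] := U_i.
by rewrite mulmxDr -scalemxAr Ai scaler0 add0r.
Qed.

Lemma C_v2 : C *m v2 = 0.
Proof.
case: U_umod => _ AC _ _ _; apply: (@addrI _ v2); rewrite addr0.
by have := congr1 (mulmx^~ u1) AC; rewrite mulmxDl -!mulmxA C_u1 A_B_v2.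
Qed.

Lemma B_v3 : B *m v3 = v2.
Proof.
case: U_umod => AB _ _ _ _; apply/eqP.
rewrite -[v2 in _ == v2](oppmx_pchar2 pchar2) -addr_eq0 addrC -C_v2 -AB.
by rewrite mulmxDl -!mulmxA A_B_v2.
Qed.

Lemma C_v3 : C *m v3 = v3.
Proof.
case: U_umod => _ AC _ _ _.
by have := congr1 (mulmx^~ v2) AC; rewrite mulmxDl -!mulmxA C_v2 mulmx0 add0r.
Qed.

Local Notation basis := (cols4 i v3 v2 u1).

Lemma basis_hom th la mu :
    A *m v3 = th *: i -> B *m u1 = mu *: i -> B *m v2 = la *: i + u1 ->
  is_umod_hom (udual (Vtlm th la mu)) U basis.
Proof.
move=> Av3 Bu1 Bv2; have [Ai Bi Ci] := U_i.
rewrite /is_umod_hom cols4_dualVa cols4_dualVb cols4_dualVc !mulmx_cols4.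
by rewrite !(oppmx_pchar2 pchar2) Ai Bi Ci Av3 Bu1 Bv2 B_v3 C_v3 C_v2 C_u1 Bv2.
Qed.

Lemma basis_inj (c : 'cV[F]_4) : basis *m c = 0 -> c = 0.
Proof.
move=> bc0; have := congr1 (mulmx p) bc0.
rewrite mulmx0 cols4_mulmx !mulmxDr -!scalemxAr p_i p_v3 p_v2 p_u1 scaler0 add0r.
rewrite !col3Z !col3D !(mulr0, mulr1, addr0, add0r) -col30 => /col3_inj[c3 c2 c1].
move: bc0; rewrite cols4_mulmx c1 c2 c3 !scale0r !addr0 => /scalei_eq0 c0.
by apply/colP => j; rewrite mxE; move: j; apply: ord4P.
Qed.

Lemma basis_surj (v : 'cV[F]_n) : exists c, basis *m c = v.
Proof.
have [x0 [x1 [x2 pv]]] : exists x0 x1 x2, p *m v = col3 x0 x1 x2.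
  by do 3!eexists; apply: col3E.
have [k Hk] : exists k, v - (x2 *: v3 + x1 *: v2 + x0 *: u1) = k *: i.
  apply: ker_pP; rewrite mulmxBr !mulmxDr -!scalemxAr p_u1 p_v2 p_v3 !col3Z !col3D.
  by rewrite pv !(mulr0, mulr1, addr0, add0r) subrr.
exists (\col_j [:: k; x2; x1; x0]`_j).
rewrite cols4_mulmx !mxE !inordK //=.
by rewrite -[RHS](subrK (x2 *: v3 + x1 *: v2 + x0 *: u1)) Hk !addrA.
Qed.

Lemma ext_iso_dual_Vtlm : exists th la mu, umod_iso U (udual (Vtlm th la mu)).
Proof.
have [th Av3] := A_v3; have [mu Bu1] := B_u1; have [la Bv2] := B_v2.
have [h [bh hb]] := mulmx_bij_inv basis_inj basis_surj.
by exists th, la, mu; apply: umod_iso_inv (basis_hom Av3 Bu1 Bv2) bh hb.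
Qed.

End Extension.

Section ExtV1V0.
Variable F : fieldType.
Hypothesis pchar2 : 2 \in [pchar F].

Lemma V1_cocycle x0 x1 x2 y0 y1 y2 fc :
    is_cocycle (V0 F) (V1 F) (row3 x0 x1 x2) (row3 y0 y1 y2) fc ->
  fc = row3 y1 0 x1 /\ y2 = x0.
Proof.
case/(cocycle_V0P (V1_umod pchar2)) => <- a_eq _ _ _.
move: a_eq; rewrite row3_V1a row3_V1b row3_V1c !row3D row3_V1a row3D.
rewrite !(addr0, add0r) (addKr_pchar2 pchar2) => /row3_inj[-> _ _].
by rewrite (addrr_pchar2 pchar2).
Qed.

Lemma dim_Ext1_V1_V0 : dim_Ext1_eq (V1 F) (V0 F) 2.
Proof.
pose za (j : 'I_2) : 'rV[F]_3 := [:: row3 0 0 1; 0]`_j.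
pose zb (j : 'I_2) : 'rV[F]_3 := [:: 0; row3 1 0 0]`_j.
exists za, zb, (fun=> 0); split.
- apply: ord2P; apply/(cocycle_V0P (V1_umod pchar2));
    by rewrite /za /zb !inordK //= -row30 !(row3_V1a, row3_V1b, row3_V1c, row3D) !addr0.
- move=> fa fb fc.
  have [x0 [x1 [x2 ->]]] : exists x0 x1 x2, fa = row3 x0 x1 x2.
    by do 3!eexists; apply: row3E.
  have [y0 [y1 [y2 ->]]] : exists y0 y1 y2, fb = row3 y0 y1 y2.
    by do 3!eexists; apply: row3E.
  move/V1_cocycle => [-> ->]; exists (fun j => [:: x2; y0]`_j).
  apply/(coboundary_V0P _ pchar2); exists (row3 y1 x0 x1).
  rewrite !big_ord2_inord /za /zb !inordK //= !(row3_V1a, row3_V1b, row3_V1c).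
  rewrite -row30 !(scaler0, addr0, row3Z, oppmx_pchar2 pchar2, row3D, mulr0, mulr1).
  by rewrite !(add0r, addr0, addrr_pchar2 pchar2).
- move=> s /(coboundary_V0P _ pchar2)[g].
  rewrite [g]row3E !big_ord2_inord /za /zb !inordK //= !(row3_V1a, row3_V1b).
  rewrite -row30 !(scaler0, addr0, add0r, row3Z, row3D, mulr0, mulr1).
  by move=> [/row3_inj[_ _ s0] /row3_inj[s1 _ _] _]; apply: ord2P.
Qed.

End ExtV1V0.

Unset Implicit Arguments.

Theorem lemma3p7 (F : closedFieldType) (pchar2 : 2 \in [pchar F]) :
  (forall (n : nat) (U : umod F n) (i : 'M[F]_(n, 1)) (p : 'M[F]_(3, n)),
     is_umod U ->
     is_umod_hom (V0 F) U i ->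
     is_umod_hom U (V1 F) p ->
     (forall w : 'cV[F]_1, i *m w = 0 -> w = 0) ->
     (forall v : 'cV[F]_n, p *m v = 0 <-> exists w : 'cV[F]_1, v = i *m w) ->
     (forall u : 'cV[F]_3, exists v : 'cV[F]_n, p *m v = u) ->
     exists th la mu : F, umod_iso U (udual (Vtlm th la mu)))
  /\ dim_Ext1_eq (V1 F) (V0 F) 2.
Proof.
split; last exact: dim_Ext1_V1_V0.
move=> n U i p U_umod i_hom p_hom i_inj ker_p p_surj.
have [u1 p_u1] := p_surj (col3 1 0 0).
exact: ext_iso_dual_Vtlm pchar2 U_umod i_hom p_hom i_inj ker_p p_u1.
Qed.
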